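(* Let $G$ be a finite group of order greater than $1$ and let $q$ be the smallest prime divisor of $|G|$. If ${\rm mf}_{pp}(G)<q$, then $G$ is cyclic.
   Context: All groups are finite. For a group $G$ and a positive integer $n$ dividing $|G|$, let $F_n(G)=\{g\in G\mid g^n=1\}$. By Frobenius' theorem $|F_n(G)|=f_n\cdot n$ for a positive integer $f_n$, called the Frobenius quotient of $G$ for $n$. ${\rm exp}(G)$ denotes the exponent of $G$. A prime-power divisor of ${\rm exp}(G)$ is a positive divisor $n$ of ${\rm exp}(G)$ of the form $n=p^k$ with $p$ prime and $k\geq 0$ (so $n=1$ is included). $\mathcal{F}_{pp}(G)=\{f_n\mid n \text{ is a prime-power divisor of } {\rm exp}(G)\}$ and ${\rm mf}_{pp}(G)$ is the maximum element of $\mathcal{F}_{pp}(G)$. *)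

From mathcomp Require Import all_boot all_fingroup all_solvable.
Import GroupScope.

Set Implicit Arguments. Unset Strict Implicit. Unset Printing Implicit Defensive.

Definition Fn (gT : finGroupType) (G : {set gT}) (n : nat) : {set gT} :=
  [set g in G | (g ^+ n == 1)%g].

(* Frobenius quotient f_n = |F_n(G)| / n (exact division by Frobenius' theorem
   when n divides |G|). *)
Definition frob_quot (gT : finGroupType) (G : {set gT}) (n : nat) : nat :=
  #|Fn G n| %/ n.

(* n is a prime power p^k (p prime, k >= 0; so n = 1 included) *)
Definition is_prime_power (n : nat) : bool :=
  [exists p : 'I_n.+1, [exists k : 'I_n.+1, prime p && (n == p ^ k)%N]].

Definition pp_divisor (gT : finGroupType) (G : {set gT}) (n : nat) : bool :=
  (n > 0) && (n %| exponent G) && is_prime_power n.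

Definition mf_pp (gT : finGroupType) (G : {set gT}) : nat :=
  \max_(n < (exponent G).+1 | pp_divisor G n) frob_quot G n.

From mathcomp Require Import all_boot all_fingroup all_solvable.

Set Implicit Arguments. Unset Strict Implicit. Unset Printing Implicit Defensive.

(* Let q be the smallest prime divisor of |G|, and P a nontrivial Sylow
   p-subgroup of G, of exponent p^k. Then P lies in F_(p^k)(G), so
   |P| < q p^k <= p^(k+1): hence |P| = p^k and P is cyclic. If P were not
   normal, there would be at least p + 1 Sylow p-subgroups, all cyclic of
   order p^k; the generators of those other than P, together with P, form at
   least p phi(p^k) + p^k = p^(k+1) elements of F_(p^k)(G), which is too many.
   So G is a nilpotent group with cyclic Sylow subgroups, hence cyclic. *)

Lemma is_prime_power_expn p k : prime p -> 0 < k -> is_prime_power (p ^ k).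
Proof.
move=> p_pr k_gt0; apply/existsP.
have lt_p : p < (p ^ k).+1 by rewrite ltnS -{1}(expn1 p) leq_pexp2l // prime_gt0.
have lt_k : k < (p ^ k).+1 by rewrite ltnS ltnW // ltn_expl ?prime_gt1.
by exists (Ordinal lt_p); apply/existsP; exists (Ordinal lt_k); rewrite /= p_pr eqxx.
Qed.

Lemma totient_pfactorS p k : prime p -> p * totient (p ^ k.+1) + p ^ k.+1 = p ^ k.+2.
Proof.
move=> p_pr; rewrite totient_pfactor //= mulnCA -expnS -mulSnr.
by rewrite prednK ?prime_gt0 // -expnS.
Qed.

Section FrobeniusSets.

Variables (gT : finGroupType) (G : {group gT}).
Local Open Scope group_scope.

Lemma sub_Fn_exponent (H : {group gT}) : H \subset G -> H \subset Fn G (exponent H).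
Proof.
move=> sHG; apply/subsetP=> x Hx; rewrite /Fn inE (subsetP sHG) //=.
exact/eqP/expg_exponent.
Qed.

Lemma pp_divisor_exponent (p : nat) (P : {group gT}) :
  p.-group P -> P \subset G -> P :!=: 1 -> pp_divisor G (exponent P).
Proof.
move=> pP sPG ntP; have [p_pr _ _] := pgroup_pdiv pP ntP.
have pE : p.-nat (exponent P) := pnat_dvd (exponent_dvdn P) pP.
rewrite /pp_divisor exponent_gt0 exponentS //= -(part_pnat_id pE) p_part.
apply: is_prime_power_expn => //; rewrite lt0n; apply: contra ntP => /eqP logE.
have eP1 : exponent P = 1%N by rewrite -(part_pnat_id pE) p_part logE.
by apply/eqP/trivgP/subsetP=> x Px; rewrite inE -(expg1 x) -eP1 expg_exponent.
Qed.

Lemma cyclic_pgroup_card_lt (p : nat) (P : {group gT}) :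
  prime p -> p.-group P -> #|P| < p * exponent P -> cyclic P.
Proof.
move=> p_pr pP; have [x Px ->] := exponent_witness (pgroup_nil pP).
have sxP : <[x]> \subset P by rewrite cycle_subG.
rewrite -(Lagrange sxP) mulnC ltn_pmul2r ?order_gt0 // => lt_ip.
have iP : p.-nat #|P : <[x]>| := pnat_dvd (dvdn_indexg P <[x]>) pP.
rewrite -(part_pnat_id iP) p_part -[X in _ < X](expn1 p) in lt_ip.
rewrite ltn_exp2l ?prime_gt1 // ltnS leqn0 in lt_ip.
by rewrite -(index1g sxP) ?cycle_cyclic // -(part_pnat_id iP) p_part (eqP lt_ip).
Qed.

Lemma card_generators_cycles (S : {set {group gT}}) n :
    {in S, forall Q : {group gT}, cyclic Q && (#|Q| == n)} ->
  #|[set x | <[x]>%G \in S]| = (#|S| * totient n)%N.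
Proof.
move=> cycS; rewrite -sum1_card (partition_big (fun x => <[x]>%G) (mem S)) => [|x];
  last by rewrite inE.
rewrite -sum_nat_const; apply: eq_bigr => Q SQ.
have /andP[/cyclicP[y defQ] /eqP <-] := cycS Q SQ.
rewrite sum1dep_card defQ totient_gen; apply: eq_card => x; rewrite !inE /generator.
rewrite -defQ eq_sym; have [xQ | neQ] := eqVneq <[x]>%G Q.
  by rewrite xQ [Q \in S]SQ -xQ eqxx.
by rewrite andbF; apply/esym/eqP=> eqxQ; case/eqP: neQ; apply: val_inj.
Qed.

Lemma card_Syl_gt_prime (p : nat) (P : {group gT}) :
  prime p -> p.-Sylow(G) P -> ~~ (P <| G) -> p < #|'Syl_p(G)|.
Proof.
move=> p_pr sylP nnP; have N_neq1 : #|'Syl_p(G)| != 1%N.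
  apply: contra nnP => /normal_sylowP[Q sylQ nQG].
  by have [x Gx ->] := Sylow_trans sylQ sylP; rewrite -(conjGid Gx) normalJ.
move: N_neq1; rewrite (divn_eq #|_| p) (card_Syl_mod G p_pr).
by case: (_ %/ p) => [|m] // _; rewrite mulSn -addnA addn1 addnS ltnS leq_addr.
Qed.

Lemma card_Fn_cyclic_Sylow (p : nat) (P : {group gT}) :
  prime p -> p.-Sylow(G) P -> cyclic P -> ~~ (P <| G) -> p * #|P| <= #|Fn G #|P| |.
Proof.
move=> p_pr sylP cycP nnP; set N := #|'Syl_p(G)|.
have ntP : P :!=: 1 by apply: contra nnP => /eqP->; apply: normal1.
have [_ _ [k oP]] := pgroup_pdiv (pHall_pgroup sylP) ntP.
have cycSyl (Q : {group gT}) : p.-Sylow(G) Q -> cyclic Q && (#|Q| == #|P|).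
  move=> sylQ; have [x _ ->] := Sylow_trans sylP sylQ.
  by rewrite cyclicJ cardJg cycP eqxx.
have lt_pN : p < N by apply: card_Syl_gt_prime sylP nnP.
set X := [set x | <[x]>%G \in 'Syl_p(G) :\ P].
have cardX : #|X| = ((N - 1) * totient #|P|)%N.
  rewrite (card_generators_cycles (n := #|P|)) => [|Q /setD1P[_]];
    last by rewrite inE => /cycSyl.
  by rewrite /N (cardsD1 P) inE sylP add1n subn1.
have XP0 : X :&: P = set0.
  apply/setP=> x; rewrite !inE; apply/negP=> /andP[/andP[neP sylx] Px].
  have /andP[_ /eqP oxP] := cycSyl _ sylx.
  by case/eqP: neP; apply: val_inj; apply/eqP; rewrite eqEcard cycle_subG Px oxP /=.
have sXPF : X :|: P \subset Fn G #|P|.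
  apply/subsetP=> x; rewrite /Fn !inE => /orP[/andP[_ sylx] | Px].
    have /andP[_ /eqP <-] := cycSyl _ sylx.
    by rewrite -cycle_subG (pHall_sub sylx); apply/eqP/expg_order.
  by rewrite (subsetP (pHall_sub sylP)) //= -(exponent_cyclic cycP) expg_exponent.
have := subset_leq_card sXPF; rewrite -[#|X :|: P|]addn0 -(cards0 gT) -XP0 cardsUI.
rewrite cardX oP -expnS -(totient_pfactorS k p_pr); apply: leq_trans.
by rewrite leq_add2r leq_mul2r leq_psubRL ?prime_gt0 // add1n lt_pN orbT.
Qed.

Lemma normal_Sylow_nil : (forall P : {group gT}, Sylow G P -> P <| G) -> nilpotent G.
Proof.
move=> nSylG; suff <- : 'F(G) = G by apply: Fitting_nil.
apply/eqP; rewrite eqEsubset Fitting_sub -{1}(Sylow_gen G) gen_subG.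
apply/bigcupsP=> P sylP; have [p _ pSylP] := SylowP _ _ sylP.
apply: subset_trans (pcore_max (pHall_pgroup pSylP) (nSylG P sylP)) _.
by rewrite -p_core_Fitting pcore_sub.
Qed.

End FrobeniusSets.

Section SmallFrobeniusQuotients.

Variables (gT : finGroupType) (G : {group gT}).
Local Open Scope group_scope.
Hypothesis mf_lt_pdiv : mf_pp G < pdiv #|G|.

Lemma card_Fn_lt_pdiv n : pp_divisor G n -> #|Fn G n| < pdiv #|G| * n.
Proof.
move=> ppn; have /andP[/andP[n_gt0 n_dvd] _] := ppn.
have lt_n : n < (exponent G).+1 by rewrite ltnS dvdn_leq ?exponent_gt0.
rewrite -ltn_divLR //; apply: leq_ltn_trans mf_lt_pdiv.
exact: (leq_bigmax_cond (Ordinal lt_n)).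
Qed.

Lemma card_Fn_exponent_lt (p : nat) (P : {group gT}) :
  p.-group P -> P \subset G -> P :!=: 1 -> #|Fn G (exponent P)| < p * exponent P.
Proof.
move=> pP sPG ntP; have [p_pr p_dvd_P _] := pgroup_pdiv pP ntP.
apply: leq_trans (card_Fn_lt_pdiv (pp_divisor_exponent pP sPG ntP)) _.
by rewrite leq_mul2r pdiv_min_dvd ?prime_gt1 ?orbT ?(dvdn_trans p_dvd_P (cardSg sPG)).
Qed.

Lemma Sylow_cyclic (p : nat) (P : {group gT}) : p.-Sylow(G) P -> cyclic P.
Proof.
move=> sylP; have [-> | ntP] := eqVneq P 1%G; first exact: cyclic1.
have [pP sPG] := (pHall_pgroup sylP, pHall_sub sylP).
have [p_pr _ _] := pgroup_pdiv pP ntP.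
apply: (cyclic_pgroup_card_lt p_pr pP).
apply: leq_ltn_trans (card_Fn_exponent_lt pP sPG ntP).
exact: subset_leq_card (sub_Fn_exponent sPG).
Qed.

Lemma Sylow_normal (p : nat) (P : {group gT}) : p.-Sylow(G) P -> P <| G.
Proof.
move=> sylP; have [-> | ntP] := eqVneq P 1%G; first exact: normal1.
have [pP sPG] := (pHall_pgroup sylP, pHall_sub sylP).
have [p_pr _ _] := pgroup_pdiv pP ntP.
have cycP := Sylow_cyclic sylP.
have := card_Fn_exponent_lt pP sPG ntP; rewrite (exponent_cyclic cycP).
by apply: contraTT => nnP; rewrite -leqNgt card_Fn_cyclic_Sylow.
Qed.

End SmallFrobeniusQuotients.

Theorem corollary1p3 (gT : finGroupType) (G : {group gT}) :
  1 < #|G| -> mf_pp G < pdiv #|G| -> cyclic G.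
Proof.
move=> _ mf_lt_pdiv; apply: nil_Zgroup_cyclic.
  by apply/forall_inP=> P /SylowP[p _ /(Sylow_cyclic mf_lt_pdiv)].
by apply: normal_Sylow_nil => P /SylowP[p _ /(Sylow_normal mf_lt_pdiv)].
Qed.
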